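(* Let $p$ be a natural number and $\mathcal{M}=M_2(\mathbb{C})\oplus_\infty\cdots\oplus_\infty M_2(\mathbb{C})$ ($p$ times). Let $\mathbf{x}=(x_1,\dots,x_p)\in\mathcal{M}$ with $x_i=\begin{bmatrix} x^{(i)}_{11} & x^{(i)}_{12}\\ x^{(i)}_{21} & x^{(i)}_{22}\end{bmatrix}$, and let $\mathcal{V}=D_2(\mathbb{C})\oplus\cdots\oplus D_2(\mathbb{C})$ ($p$ times), where $D_2(\mathbb{C})$ is the subspace of diagonal matrices in $M_2(\mathbb{C})$. Then \[ dist(\mathbf{x},\mathcal{V}) = \max\{|x_{12}^{(i)}|,|x_{21}^{(i)}|:~1\leq i \leq p\} \quad \text{and} \quad dist_1(\mathbf{x},\mathcal{V})=\sum_{i=1}^p \big(|x^{(i)}_{21}|+|x^{(i)}_{12}|\big). \]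
   Context: $\mathcal{M}$ carries the $C^*$-norm $\|(z_1,\dots,z_p)\|=\max_i\|z_i\|$ (operator norms), and $dist$ is the distance in this norm. $dist_1$ is the distance with respect to the norm $\|(z_1,\dots,z_p)\|_1=\sum_i Tr(|z_i|)$ (sum of trace norms). *)

From HB Require Import structures.
From mathcomp Require Import all_boot all_order all_algebra.
From mathcomp Require Import all_classical all_reals.
From mathcomp Require Import complex.
Set Implicit Arguments. Unset Strict Implicit. Unset Printing Implicit Defensive.
Import Order.TTheory GRing.Theory Num.Theory.
Local Open Scope ring_scope.
Local Open Scope classical_set_scope.

Section Defs.
Variable R : realType.
Local Notation C := (R[i]).

Definition cabs (z : C) : R := complex.Re `|z|.

Definition adjmx m n (A : 'M[C]_(m, n)) : 'M[C]_(n, m) := (map_mx Num.conj A)^T.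

Definition vnorm (v : 'cV[C]_2) : R := Num.sqrt (\sum_(k < 2) cabs (v k 0) ^+ 2).

Definition opnorm (A : 'M[C]_2) : R :=
  sup [set vnorm (A *m v) | v in [set v : 'cV[C]_2 | vnorm v <= 1]].

Definition psd (P : 'M[C]_2) : Prop :=
  P = adjmx P /\ forall v : 'cV[C]_2, 0 <= (adjmx v *m P *m v) 0 0.

(* |A| = (A^* A)^{1/2}, the (unique) positive semidefinite square root *)
Definition absmx (A : 'M[C]_2) : 'M[C]_2 :=
  xget 0 [set P | psd P /\ P *m P = adjmx A *m A].

Definition trnorm (A : 'M[C]_2) : R := complex.Re (\tr (absmx A)).

Definition Mnorm (p : nat) (z : 'I_p -> 'M[C]_2) : R :=
  \big[Num.max/0]_(i < p) opnorm (z i).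

Definition Mnorm1 (p : nat) (z : 'I_p -> 'M[C]_2) : R :=
  \sum_(i < p) trnorm (z i).

Definition dist (p : nat) (x : 'I_p -> 'M[C]_2) (V : set ('I_p -> 'M[C]_2)) : R :=
  inf [set Mnorm (fun i => x i - v i) | v in V].

Definition dist1 (p : nat) (x : 'I_p -> 'M[C]_2) (V : set ('I_p -> 'M[C]_2)) : R :=
  inf [set Mnorm1 (fun i => x i - v i) | v in V].

Definition diagV (p : nat) : set ('I_p -> 'M[C]_2) :=
  [set v | forall i, is_diag_mx (v i)].

End Defs.

From HB Require Import structures.
From mathcomp Require Import all_boot all_order all_algebra.
From mathcomp Require Import all_classical all_reals.
From mathcomp Require Import complex.
From mathcomp Require Import ring lra.
Set Implicit Arguments. Unset Strict Implicit. Unset Printing Implicit Defensive.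
Import Order.TTheory GRing.Theory Num.Theory.
Local Open Scope complex_scope.
Local Open Scope ring_scope.
Local Open Scope classical_set_scope.

(* The infimum is attained at the block-wise diagonal part of x.  For a 2x2
   matrix A = [a b; c d] both norms dominate the off-diagonal entries: the
   operator norm because b and c are coordinates of images of unit vectors,
   and the trace norm because
     Tr|A| = sqrt (|a|^2 + |b|^2 + |c|^2 + |d|^2 + 2 |det A|) >= |b| + |c|.
   This closed form holds since the trace of a positive square root P of A^*A
   is fixed by Tr (P^2) = Tr (A^*A) and det P = |det A|, and such a P exists
   by Cayley-Hamilton.  When a = d = 0 both bounds are equalities. *)

Lemma big_ord2 (V : nmodType) (F : 'I_2 -> V) :
  \sum_(k < 2) F k = F ord0 + F ord_max.
Proof. by rewrite !big_ord_recl big_ord0 addr0; congr (_ + F _); apply: val_inj. Qed.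

Lemma ord2P (i : 'I_2) : i = ord0 \/ i = ord_max.
Proof. by case: i => [[|[|//]] ?]; [left | right]; apply: val_inj. Qed.

Section TwoByTwo.
Variable K : comNzRingType.
Implicit Types A M : 'M[K]_2.

Lemma mxtrace2 A : \tr A = A ord0 ord0 + A ord_max ord_max.
Proof. by rewrite /mxtrace big_ord2. Qed.

Lemma det_mx2 A :
  \det A = A ord0 ord0 * A ord_max ord_max - A ord0 ord_max * A ord_max ord0.
Proof.
rewrite (expand_det_row A ord0) big_ord2 /cofactor !det_mx11 !mxE /=.
have -> : lift ord0 (0 : 'I_1) = ord_max by apply: val_inj.
have -> : lift ord_max (0 : 'I_1) = ord0 by apply: val_inj.
by rewrite /= expr0 expr1; ring.
Qed.

Lemma cayley_hamilton2 M : M *m M = \tr M *: M - (\det M)%:M.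
Proof.
rewrite mxtrace2 det_mx2; apply/matrixP => i j; rewrite !mxE big_ord2.
by case: (ord2P i) => ->; case: (ord2P j) => -> /=; ring.
Qed.

Lemma mxtrace_sqr2 M : \tr (M *m M) = \tr M ^+ 2 - 2 * \det M.
Proof.
rewrite cayley_hamilton2 linearB /= mxtraceZ mxtrace_scalar.
by rewrite expr2 mulr_natl.
Qed.

Lemma sqr_add_scalar2 M (s : K) :
  (M + s%:M) *m (M + s%:M) = (\tr M + 2 * s) *: M + (s ^+ 2 - \det M)%:M.
Proof.
rewrite mxtrace2 det_mx2; apply/matrixP => i j; rewrite !mxE big_ord2 !mxE.
by case: (ord2P i) => ->; case: (ord2P j) => -> /=; ring.
Qed.

End TwoByTwo.

Section ComplexModulus.
Variable R : realType.
Implicit Types z w : R[i].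

Lemma norm_cabs z : `|z| = (cabs z)%:C.
Proof. by case: z. Qed.

Lemma cabs_ge0 z : 0 <= cabs z.
Proof. by rewrite -ler0c -norm_cabs. Qed.

Lemma cabs0 : cabs (0 : R[i]) = 0.
Proof. by apply: complexI; rewrite -norm_cabs normr0. Qed.

Lemma cabs1 : cabs (1 : R[i]) = 1.
Proof. by apply: complexI; rewrite -norm_cabs normr1. Qed.

Lemma cabs_eq0 z : (cabs z == 0) = (z == 0).
Proof. by rewrite -(inj_eq (@complexI R)) -norm_cabs normr_eq0. Qed.

Lemma cabsN z : cabs (- z) = cabs z.
Proof. by apply: complexI; rewrite -!norm_cabs normrN. Qed.

Lemma cabsM z w : cabs (z * w) = cabs z * cabs w.
Proof. by apply: complexI; rewrite rmorphM /= -!norm_cabs normrM. Qed.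

Lemma cabsD z w : cabs (z + w) <= cabs z + cabs w.
Proof. by rewrite -lecR rmorphD /= -!norm_cabs ler_normD. Qed.

Lemma conj_real (r : R) : Num.conj r%:C = r%:C.
Proof. exact: conjc_real. Qed.

Lemma conjc_mul_self z : Num.conj z * z = (cabs z ^+ 2)%:C.
Proof. by rewrite -normCKC norm_cabs rmorphXn. Qed.

End ComplexModulus.

Section Adjoint.
Variable R : realType.
Local Notation C := R[i].

Lemma adjmxE m n (A : 'M[C]_(m, n)) i j : adjmx A i j = Num.conj (A j i).
Proof. by rewrite !mxE. Qed.

Lemma adjmxK m n (A : 'M[C]_(m, n)) : adjmx (adjmx A) = A.
Proof. by apply/matrixP => i j; rewrite !adjmxE conjCK. Qed.

Lemma adjmxM m n p (A : 'M[C]_(m, n)) (B : 'M[C]_(n, p)) :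
  adjmx (A *m B) = adjmx B *m adjmx A.
Proof. by rewrite /adjmx map_mxM trmx_mul. Qed.

Lemma adjmxD m n (A B : 'M[C]_(m, n)) : adjmx (A + B) = adjmx A + adjmx B.
Proof. by apply/matrixP => i j; rewrite !adjmxE !mxE rmorphD. Qed.

Lemma adjmxZ m n (a : C) (A : 'M[C]_(m, n)) : adjmx (a *: A) = Num.conj a *: adjmx A.
Proof. by apply/matrixP => i j; rewrite !adjmxE !mxE rmorphM. Qed.

Lemma adjmx_scalar n (a : C) : adjmx (a%:M : 'M[C]_n) = (Num.conj a)%:M.
Proof. by apply/matrixP => i j; rewrite !adjmxE !mxE rmorphMn eq_sym. Qed.

Lemma adjmx_delta n (i : 'I_n) : adjmx (delta_mx i 0 : 'cV[C]_n) = delta_mx 0 i.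
Proof. by apply/matrixP => k l; rewrite !adjmxE !mxE andbC rmorph_nat. Qed.

Definition sqfrob m n (A : 'M[C]_(m, n)) : R :=
  \sum_(i < m) \sum_(j < n) cabs (A i j) ^+ 2.

Lemma mxtrace_adjmx_mul m n (A : 'M[C]_(m, n)) :
  \tr (adjmx A *m A) = (sqfrob A)%:C.
Proof.
rewrite /mxtrace /sqfrob exchange_big rmorph_sum; apply: eq_bigr => j _.
by rewrite mxE rmorph_sum; apply: eq_bigr => i _; rewrite adjmxE conjc_mul_self.
Qed.

Lemma sqfrob_ge0 m n (A : 'M[C]_(m, n)) : 0 <= sqfrob A.
Proof. by apply: sumr_ge0 => i _; apply: sumr_ge0 => j _; apply: sqr_ge0. Qed.

Lemma sqfrob_eq0 m n (A : 'M[C]_(m, n)) : sqfrob A = 0 -> A = 0.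
Proof.
move/psumr_eq0P => /(_ (fun i _ => sumr_ge0 _ (fun j _ => sqr_ge0 _))) A0.
apply/matrixP => i j; rewrite mxE; apply/eqP; rewrite -cabs_eq0 -sqrf_eq0.
by move/psumr_eq0P: (A0 i isT) => -> //= k _; apply: sqr_ge0.
Qed.

Lemma adjmx_mul_self_ge0 n (w : 'cV[C]_n) : 0 <= (adjmx w *m w) 0 0.
Proof. by rewrite -trace_mx11 mxtrace_adjmx_mul ler0c sqfrob_ge0. Qed.

Lemma det_adjmx_mul n (A : 'M[C]_n) : \det (adjmx A *m A) = (cabs (\det A) ^+ 2)%:C.
Proof. by rewrite det_mulmx /adjmx det_tr det_map_mx conjc_mul_self. Qed.

End Adjoint.

Section PositiveSemidefinite.
Variable R : realType.
Local Notation C := R[i].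
Local Notation qform P v := ((adjmx v *m P *m v) 0 0).
Implicit Types P : 'M[C]_2.

Definition cvec2 (a b : C) : 'cV[C]_2 := \col_i (if i == ord0 then a else b).

Lemma qform_cvec2 P a b :
  qform P (cvec2 a b) =
  Num.conj a * (P ord0 ord0 * a + P ord0 ord_max * b)
  + Num.conj b * (P ord_max ord0 * a + P ord_max ord_max * b).
Proof. by rewrite !mxE big_ord2 !mxE !big_ord2 !adjmxE !mxE /=; ring. Qed.

Lemma psd_conj_entry P : psd P -> forall i j, P j i = Num.conj (P i j).
Proof. by case=> + _ i j => {1}->; rewrite adjmxE. Qed.

Lemma psd_diag_ge0 P : psd P -> forall i, 0 <= P i i.
Proof.
by case=> _ hq i; move: (hq (delta_mx i 0)); rewrite adjmx_delta -rowE -colE !mxE.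
Qed.

Lemma psd_mxtrace_ge0 P : psd P -> 0 <= \tr P.
Proof. by move=> hP; rewrite mxtrace2 addr_ge0 ?(psd_diag_ge0 hP). Qed.

Lemma psd_det_ge0 P : psd P -> 0 <= \det P.
Proof.
move=> hP; have [_ hq] := hP.
set a := P ord0 ord0; set b := P ord_max ord_max; set c := P ord0 ord_max.
have a0 : 0 <= a := psd_diag_ge0 hP ord0.
have b0 : 0 <= b := psd_diag_ge0 hP ord_max.
have aR : Num.conj a = a by rewrite -(psd_conj_entry hP).
have bR : Num.conj b = b by rewrite -(psd_conj_entry hP).
have qformE u w : qform P (cvec2 u w) =
    Num.conj u * (a * u + c * w) + Num.conj w * (Num.conj c * u + b * w).
  by rewrite qform_cvec2 (psd_conj_entry hP ord0 ord_max).
have detE : \det P = a * b - c * Num.conj c.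
  by rewrite det_mx2 (psd_conj_entry hP ord0 ord_max).
have [ab0|abn0] := eqVneq (a + b) 0.
  move: ab0 => /eqP; rewrite paddr_eq0 // => /andP[/eqP a00 /eqP b00].
  suff -> : \det P = qform P (cvec2 1 (- Num.conj c)) / 2 by rewrite divr_ge0.
  by rewrite qformE rmorphN /= conjCK conjC1 detE a00 b00; field.
have ad : 0 <= a * \det P.
  suff -> : a * \det P = qform P (cvec2 c (- a)) by [].
  by rewrite qformE rmorphN /= aR detE; ring.
have bd : 0 <= b * \det P.
  suff -> : b * \det P = qform P (cvec2 b (- Num.conj c)) by [].
  by rewrite qformE rmorphN /= bR conjCK detE; ring.
have abp : 0 < a + b by rewrite lt_def abn0 addr_ge0.
by rewrite -(pmulr_rge0 _ abp) mulrDl addr_ge0.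
Qed.

End PositiveSemidefinite.

Section SqrtBounds.
Variable F : rcfType.
Implicit Types x y : F.

Lemma le_sqrtr_of_sqr x y : 0 <= y -> y ^+ 2 <= x -> y <= Num.sqrt x.
Proof. by move=> y0 h; rewrite -(ger0_norm y0) -sqrtr_sqr ler_wsqrtr. Qed.

Lemma sqrtr_le_of_sqr x y : 0 <= y -> x <= y ^+ 2 -> Num.sqrt x <= y.
Proof. by move=> y0 h; rewrite -(ger0_norm y0) -sqrtr_sqr ler_wsqrtr. Qed.

End SqrtBounds.

Section TraceNorm.
Variable R : realType.
Local Notation C := R[i].
Implicit Types A P : 'M[C]_2.

Lemma sqfrob2 A : sqfrob A = cabs (A ord0 ord0) ^+ 2 + cabs (A ord0 ord_max) ^+ 2
  + cabs (A ord_max ord0) ^+ 2 + cabs (A ord_max ord_max) ^+ 2.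
Proof. by rewrite /sqfrob !big_ord2 !addrA. Qed.

Definition trnorm_formula A : R := Num.sqrt (sqfrob A + 2 * cabs (\det A)).

Lemma trnorm_formula_sqr A : trnorm_formula A ^+ 2 = sqfrob A + 2 * cabs (\det A).
Proof. by rewrite sqr_sqrtr // addr_ge0 ?sqfrob_ge0 ?mulr_ge0 ?cabs_ge0. Qed.

Lemma psd_sqrt_mxtrace A P : psd P -> P *m P = adjmx A *m A ->
  \tr P = (trnorm_formula A)%:C.
Proof.
move=> hP PPE.
have detE : \det P = (cabs (\det A))%:C.
  apply/eqP; rewrite -(eqrXn2 (n := 2)) ?ler0c ?cabs_ge0 ?psd_det_ge0 //.
  by rewrite [X in X == _]expr2 -det_mulmx PPE det_adjmx_mul rmorphXn.
apply/eqP; rewrite -(eqrXn2 (n := 2)) ?ler0c ?sqrtr_ge0 ?psd_mxtrace_ge0 // -rmorphXn.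
rewrite trnorm_formula_sqr -[\tr P ^+ 2](subrK (2 * \det P)) -mxtrace_sqr2 PPE.
by rewrite mxtrace_adjmx_mul detE rmorphD rmorphM /= rmorph_nat.
Qed.

(* With M = A^*A and s = |det A| we have s^2 = det M, so Cayley-Hamilton gives
   (M + s)^2 = (Tr M + 2 s) M = (trnorm_formula A)^2 M. *)
Definition absmx2 A : 'M[C]_2 :=
  ((trnorm_formula A)^-1)%:C *: (adjmx A *m A + (cabs (\det A))%:C%:M).

Lemma absmx2_psd A : psd (absmx2 A).
Proof.
have MH : adjmx (adjmx A *m A) = adjmx A *m A by rewrite adjmxM adjmxK.
split.
  by rewrite adjmxZ adjmxD MH adjmx_scalar !conj_real.
move=> v; rewrite -scalemxAr -scalemxAl mxE mulr_ge0 ?ler0c ?invr_ge0 ?sqrtr_ge0 //.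
rewrite mulmxDr mulmxDl mul_mx_scalar -scalemxAl mxE [X in _ + X]mxE.
have -> : adjmx v *m (adjmx A *m A) *m v = adjmx (A *m v) *m (A *m v).
  by rewrite adjmxM !mulmxA.
by rewrite addr_ge0 ?mulr_ge0 ?adjmx_mul_self_ge0 ?ler0c ?cabs_ge0.
Qed.

Lemma absmx2_sqr A : absmx2 A *m absmx2 A = adjmx A *m A.
Proof.
have [r0|rn0] := eqVneq (trnorm_formula A) 0.
  move: (trnorm_formula_sqr A); rewrite r0 expr0n /= => /esym/eqP.
  rewrite paddr_eq0 ?sqfrob_ge0 ?mulr_ge0 ?cabs_ge0 // => /andP[/eqP/sqfrob_eq0 A0 _].
  by rewrite /absmx2 r0 invr0 rmorph0 scale0r mul0mx A0 mulmx0.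
rewrite /absmx2 -scalemxAl -scalemxAr scalerA sqr_add_scalar2.
rewrite mxtrace_adjmx_mul det_adjmx_mul -rmorphXn subrr raddf0 addr0.
have -> : (sqfrob A)%:C + 2 * (cabs (\det A))%:C = (trnorm_formula A ^+ 2)%:C.
  by rewrite trnorm_formula_sqr rmorphD rmorphM /= rmorph_nat.
rewrite scalerA -!rmorphM /=.
have -> : (trnorm_formula A)^-1 * (trnorm_formula A)^-1 * trnorm_formula A ^+ 2 = 1.
  by field.
by rewrite scale1r.
Qed.

Lemma trnormE A : trnorm A = trnorm_formula A.
Proof.
have /(xgetPex 0) [hP hPP] : exists P, psd P /\ P *m P = adjmx A *m A.
  by exists (absmx2 A); split; [exact: absmx2_psd | exact: absmx2_sqr].
by rewrite /trnorm /absmx (psd_sqrt_mxtrace hP hPP).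
Qed.

Lemma trnorm_ge_offdiag A :
  cabs (A ord_max ord0) + cabs (A ord0 ord_max) <= trnorm A.
Proof.
rewrite trnormE; apply: le_sqrtr_of_sqr; first by rewrite addr_ge0 ?cabs_ge0.
have offdiag_le : cabs (A ord0 ord_max) * cabs (A ord_max ord0)
    <= cabs (A ord0 ord0) * cabs (A ord_max ord_max) + cabs (\det A).
  rewrite -!cabsM -(cabsN (\det A)); apply: le_trans (cabsD _ _).
  by rewrite det_mx2 opprB addrC subrK.
rewrite sqfrob2; have := sqr_ge0 (cabs (A ord0 ord0) - cabs (A ord_max ord_max)).
nra.
Qed.

Lemma trnorm_offdiag A : A ord0 ord0 = 0 -> A ord_max ord_max = 0 ->
  trnorm A = cabs (A ord_max ord0) + cabs (A ord0 ord_max).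
Proof.
move=> A00 A11; rewrite trnormE /trnorm_formula sqfrob2 det_mx2 A00 A11 mul0r sub0r.
rewrite cabsN cabsM cabs0 -[RHS]ger0_norm ?addr_ge0 ?cabs_ge0 // -sqrtr_sqr.
by congr Num.sqrt; ring.
Qed.

End TraceNorm.

Section OperatorNorm.
Variable R : realType.
Local Notation C := R[i].
Implicit Types (A : 'M[C]_2) (v : 'cV[C]_2).

Lemma cabs_sum I (r : seq I) (P : pred I) (F : I -> C) :
  cabs (\sum_(i <- r | P i) F i) <= \sum_(i <- r | P i) cabs (F i).
Proof.
elim/big_rec2: _ => [|i y z _ ih]; first by rewrite cabs0.
by apply: le_trans (cabsD _ _) _; rewrite lerD2l.
Qed.

Lemma vnormE v :
  vnorm v = Num.sqrt (cabs (v ord0 0) ^+ 2 + cabs (v ord_max 0) ^+ 2).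
Proof. by rewrite /vnorm big_ord2. Qed.

Lemma cabs_le_vnorm v i : cabs (v i 0) <= vnorm v.
Proof.
rewrite vnormE; apply: le_sqrtr_of_sqr; first exact: cabs_ge0.
by case: (ord2P i) => ->; rewrite ?lerDl ?lerDr sqr_ge0.
Qed.

Lemma vnorm_le_sum v : vnorm v <= cabs (v ord0 0) + cabs (v ord_max 0).
Proof.
rewrite vnormE; apply: sqrtr_le_of_sqr; first by rewrite addr_ge0 ?cabs_ge0.
have := mulr_ge0 (cabs_ge0 (v ord0 0)) (cabs_ge0 (v ord_max 0)); nra.
Qed.

Lemma vnorm_delta (j : 'I_2) : vnorm (delta_mx j 0 : 'cV[C]_2) = 1.
Proof.
rewrite vnormE !mxE !andbT.
by case: (ord2P j) => -> /=; rewrite cabs0 cabs1 expr0n expr1n ?addr0 ?add0r sqrtr1.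
Qed.

Lemma vnorm_le1 v : vnorm v <= 1 ->
  cabs (v ord0 0) ^+ 2 + cabs (v ord_max 0) ^+ 2 <= 1.
Proof. by rewrite vnormE -{1}sqrtr1 ler_sqrt. Qed.

Lemma opnorm_set_ubound A :
  has_ubound [set vnorm (A *m v) | v in [set v : 'cV[C]_2 | vnorm v <= 1]].
Proof.
exists (\sum_i \sum_j cabs (A i j)) => _ [v v1 <-].
have vk k : cabs (v k 0) <= 1 := le_trans (cabs_le_vnorm v k) v1.
apply: le_trans (vnorm_le_sum _) _; rewrite [X in _ <= X]big_ord2.
apply: lerD; rewrite mxE; apply: le_trans (cabs_sum _ _ _) _; apply: ler_sum => j _;
  by rewrite cabsM ler_piMr ?cabs_ge0.
Qed.

Lemma cabs_le_opnorm A i j : cabs (A i j) <= opnorm A.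
Proof.
have := cabs_le_vnorm (A *m delta_mx j 0) i; rewrite -colE mxE => /le_trans; apply.
apply: (ub_le_sup (opnorm_set_ubound A)); exists (delta_mx j 0).
  by rewrite /= vnorm_delta.
by rewrite colE.
Qed.

Lemma opnorm_offdiag_le A : A ord0 ord0 = 0 -> A ord_max ord_max = 0 ->
  opnorm A <= Num.max (cabs (A ord0 ord_max)) (cabs (A ord_max ord0)).
Proof.
move=> A00 A11; set m := Num.max _ _.
have bm : cabs (A ord0 ord_max) <= m by rewrite le_max lexx.
have cm : cabs (A ord_max ord0) <= m by rewrite le_max lexx orbT.
have b0 := cabs_ge0 (A ord0 ord_max); have c0 := cabs_ge0 (A ord_max ord0).
have b2 : cabs (A ord0 ord_max) ^+ 2 <= m ^+ 2 by nra.
have c2 : cabs (A ord_max ord0) ^+ 2 <= m ^+ 2 by nra.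
apply: ge_sup.
  by exists (vnorm (A *m delta_mx ord0 0)), (delta_mx ord0 0); rewrite //= vnorm_delta.
move=> _ [v /vnorm_le1 v1 <-]; rewrite vnormE.
apply: sqrtr_le_of_sqr; first exact: le_trans bm.
rewrite !mxE !big_ord2 A00 A11 !mul0r add0r addr0 !cabsM.
have := sqr_ge0 (cabs (v ord0 0)); have := sqr_ge0 (cabs (v ord_max 0)).
nra.
Qed.

End OperatorNorm.

Section DiagonalPart.
Variable V : zmodType.

Definition diag_part n (A : 'M[V]_n) : 'M[V]_n := diag_mx (\row_k A k k).

Lemma diag_part_is_diag n (A : 'M[V]_n) : is_diag_mx (diag_part A).
Proof. exact: diag_mx_is_diag. Qed.

Lemma sub_diag_part_diag n (A : 'M[V]_n) i : (A - diag_part A) i i = 0.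
Proof. by rewrite !mxE eqxx mulr1n subrr. Qed.

Lemma sub_diag_offdiag n (A D : 'M[V]_n) i j :
  is_diag_mx D -> i != j -> (A - D) i j = A i j.
Proof. by move=> /is_diag_mxP D0 ij; rewrite !mxE D0 // subr0. Qed.

End DiagonalPart.

Section BlockDistance.
Variable R : realType.
Implicit Types A D : 'M[R[i]]_2.

Lemma sub_diag_offdiag2 A D : is_diag_mx D ->
  (A - D) ord0 ord_max = A ord0 ord_max /\ (A - D) ord_max ord0 = A ord_max ord0.
Proof. by move=> Dd; split; apply: sub_diag_offdiag. Qed.

Lemma opnorm_sub_diag_ge A D : is_diag_mx D ->
  Num.max (cabs (A ord0 ord_max)) (cabs (A ord_max ord0)) <= opnorm (A - D).
Proof.
by case/(sub_diag_offdiag2 A) => <- <-; rewrite ge_max !cabs_le_opnorm.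
Qed.

Lemma opnorm_sub_diag_part A :
  opnorm (A - diag_part A) = Num.max (cabs (A ord0 ord_max)) (cabs (A ord_max ord0)).
Proof.
apply/le_anti; rewrite opnorm_sub_diag_ge ?diag_part_is_diag // andbT.
have [<- <-] := sub_diag_offdiag2 A (diag_part_is_diag A).
by apply: opnorm_offdiag_le; apply: sub_diag_part_diag.
Qed.

Lemma trnorm_sub_diag_ge A D : is_diag_mx D ->
  cabs (A ord_max ord0) + cabs (A ord0 ord_max) <= trnorm (A - D).
Proof. by case/(sub_diag_offdiag2 A) => <- <-; apply: trnorm_ge_offdiag. Qed.

Lemma trnorm_sub_diag_part A :
  trnorm (A - diag_part A) = cabs (A ord_max ord0) + cabs (A ord0 ord_max).
Proof.
have [<- <-] := sub_diag_offdiag2 A (diag_part_is_diag A).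
by apply: trnorm_offdiag; apply: sub_diag_part_diag.
Qed.

End BlockDistance.

Lemma inf_image_min (T : Type) (R : realType) (V : set T) (f : T -> R) v0 m :
  V v0 -> f v0 = m -> (forall v, V v -> m <= f v) -> inf [set f v | v in V] = m.
Proof.
move=> Vv0 <- fmin; apply/le_anti/andP; split.
  apply: ge_inf; last by exists v0.
  by exists (f v0) => _ [v Vv <-]; exact: fmin.
apply: lb_le_inf; first by exists (f v0), v0.
by move=> _ [v Vv <-]; exact: fmin.
Qed.

Theorem corollary4p1 (R : realType) (p : nat) (x : 'I_p -> 'M[R[i]]_2) :
  dist x (@diagV R p) =
    \big[Num.max/0]_(k < p) Num.max (cabs (x k ord0 ord_max)) (cabs (x k ord_max ord0))
  /\
  dist1 x (@diagV R p) =
    \sum_(k < p) (cabs (x k ord_max ord0) + cabs (x k ord0 ord_max)).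
Proof.
have dV : diagV (fun k => diag_part (x k)) by move=> k; exact: diag_part_is_diag.
split; apply: (inf_image_min dV) => [|v vV].
- by apply: eq_bigr => k _; rewrite opnorm_sub_diag_part.
- apply: (big_ind2 (fun a b => a <= b)) => // [a b c d|k _]; first exact: le_max2.
  exact: opnorm_sub_diag_ge.
- by apply: eq_bigr => k _; rewrite trnorm_sub_diag_part.
- by apply: ler_sum => k _; apply: trnorm_sub_diag_ge.
Qed.
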